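(* Let $(A,+,\circ)$ be a skew brace of abelian type (possibly infinite). The following are equivalent: (i) $A$ is $*$-nilpotent; (ii) $A$ is right $*$-nilpotent and $(A,\circ)$ is nilpotent; (iii) $A$ is centrally nilpotent.
   Context: A skew brace is a triple $(A,+,\circ)$ where $(A,+)$ and $(A,\circ)$ are groups (written additively for $+$) such that $x\circ(y+z)=(x\circ y)-x+(x\circ z)$ for all $x,y,z\in A$; the common neutral element is $0$. It is of abelian type if $(A,+)$ is abelian. Let $\lambda_x(y)=-x+(x\circ y)$ and $x*y=\lambda_x(y)-y$; $[x,y]_+=x+y-x-y$. For subsets $X,Y$, $X*Y$ is the subgroup of $(A,+)$ generated by $\{x*y\}$. Left and right series: $A^1=A$, $A^{n+1}=A*A^n$; $A^{(1)}=A$, $A^{(n+1)}=A^{(n)}*A$. $A$ is left (resp. right) $*$-nilpotent if $A^n=0$ (resp. $A^{(n)}=0$) for some $n$, and $*$-nilpotent if both. An ideal is a subgroup $I$ of $(A,+)$ with $\lambda_a(I)\subseteq I$ for all $a\in A$ that is normal in both $(A,+)$ and $(A,\circ)$. The center is $\zeta(A)=\{x\in A: x*y=y*x=[x,y]_+=0\ \forall y\in A\}$. $A$ is centrally nilpotent if there is a chain of ideals $0=I_0\leq\dots\leq I_n=A$ with $I_{j+1}/I_j\leq\zeta(A/I_j)$ for all $j$. *)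

From HB Require Import structures.
From mathcomp Require Import all_boot all_algebra.
Set Implicit Arguments. Unset Strict Implicit. Unset Printing Implicit Defensive.
Import GRing.Theory.
Local Open Scope ring_scope.

(* A skew brace of abelian type: the additive group (A,+) is an abelian group
   (a zmodType, with neutral element 0), and (A,circ) is a group with neutral
   element 0 and inverse map cinv, satisfying the brace compatibility law. *)
Definition is_skew_brace (A : zmodType) (circ : A -> A -> A) (cinv : A -> A) : Prop :=
  [/\ (forall x y z, circ x (circ y z) = circ (circ x y) z),
      (forall x, circ 0 x = x /\ circ x 0 = x),
      (forall x, circ x (cinv x) = 0 /\ circ (cinv x) x = 0) &
      (forall x y z, circ x (y + z) = circ x y - x + circ x z)].

Section SkewBrace.
Variables (A : zmodType) (circ : A -> A -> A) (cinv : A -> A).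

Definition lam (x y : A) : A := - x + circ x y.
Definition bstar (x y : A) : A := lam x y - y.
Definition addcomm (x y : A) : A := x + y - x - y.

Inductive gen_add (S : A -> Prop) : A -> Prop :=
  | ga_in x : S x -> gen_add S x
  | ga_0 : gen_add S 0
  | ga_opp x : gen_add S x -> gen_add S (- x)
  | ga_add x y : gen_add S x -> gen_add S y -> gen_add S (x + y).

Definition star_set (X Y : A -> Prop) : A -> Prop :=
  gen_add (fun z => exists x y, [/\ X x, Y y & z = bstar x y]).

Definition setA : A -> Prop := fun _ => True.

(* left_series n = A^(n+1) : A^1 = A, A^(n+1) = A * A^n *)
Fixpoint left_series (n : nat) : A -> Prop :=
  match n with
  | O => setA
  | S m => star_set setA (left_series m)
  end.

(* right_series n = A^((n+1)) : A^((1)) = A, A^((n+1)) = A^((n)) * A *)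
Fixpoint right_series (n : nat) : A -> Prop :=
  match n with
  | O => setA
  | S m => star_set (right_series m) setA
  end.

Definition is_trivial (X : A -> Prop) : Prop := forall x, X x -> x = 0.

Definition left_star_nilpotent : Prop := exists n, is_trivial (left_series n).
Definition right_star_nilpotent : Prop := exists n, is_trivial (right_series n).
Definition star_nilpotent : Prop := left_star_nilpotent /\ right_star_nilpotent.

Definition circ_comm (x y : A) : A := circ (circ (cinv x) (cinv y)) (circ x y).

Inductive gen_circ (S : A -> Prop) : A -> Prop :=
  | gc_in x : S x -> gen_circ S x
  | gc_1 : gen_circ S 0
  | gc_inv x : gen_circ S x -> gen_circ S (cinv x)
  | gc_mul x y : gen_circ S x -> gen_circ S y -> gen_circ S (circ x y).

(* lower_central n = gamma_(n+1)(A,circ) *)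
Fixpoint lower_central (n : nat) : A -> Prop :=
  match n with
  | O => setA
  | S m => gen_circ (fun z => exists x y, [/\ setA x, lower_central m y & z = circ_comm x y])
  end.

Definition circ_nilpotent : Prop := exists n, is_trivial (lower_central n).

Definition is_ideal (I : A -> Prop) : Prop :=
  I 0 /\ (forall x y, I x -> I y -> I (x - y)) /\
  (forall a x, I x -> I (lam a x)) /\
  (forall a x, I x -> I (a + x - a)) /\
  (forall x y, I x -> I y -> I (circ x (cinv y))) /\
  (forall a x, I x -> I (circ (circ a x) (cinv a))).

(* For an ideal I, the class x + I lies in the center zeta(A/I) of the quotient
   skew brace A/I (whose operations are induced from A, and whose zero is I). *)
Definition in_center_mod (I : A -> Prop) (x : A) : Prop :=
  forall y, [/\ I (bstar x y), I (bstar y x) & I (addcomm x y)].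

Definition centrally_nilpotent : Prop :=
  exists (n : nat) (I : nat -> A -> Prop),
    [/\ (forall x, I 0%N x <-> x = 0),
        (forall x, I n x),
        (forall j, (j <= n)%N -> is_ideal (I j)),
        (forall j, (j < n)%N -> forall x, I j x -> I j.+1 x) &
        (forall j, (j < n)%N -> forall x, I j.+1 x -> in_center_mod (I j) x)].

End SkewBrace.

From Pilot Require Import Defs.
From mathcomp Require Import all_boot all_algebra zify.
Set Implicit Arguments. Unset Strict Implicit. Unset Printing Implicit Defensive.
Import GRing.Theory.
Local Open Scope ring_scope.

(* (iii) => (i), (ii): along a central series 0 = I_0 <= ... <= I_n = A, an
   induction shows that A^(j+1), A^((j+1)) and gamma_(j+1)(A, circ) all lie
   in I_(n-j), so they vanish for j = n.
   (i) or (ii) => (iii): the right series A^((k)) is a descending chain of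
   ideals. Modulo A^((k+1)), on A^((k)) the operations circ and cinv agree with
   + and -, so each step A^((k)) >= A^((k+1)) can be refined into a central
   series by intersecting A^((k)) with the left series A^(i) (case (i)) or with
   the lower central series of (A, circ) (case (ii)).  Since A^((m)) = 0 for
   some m, gluing these refinements gives a central series of A.

   In the comments below the series are indexed from 0, as in the
   definitions: A^((k)), A^(i) and gamma_i stand for right_series k,
   left_series i and lower_central i, with A^((0)) = A^(0) = gamma_0 = A. *)

Section SkewBrace.
Variables (A : zmodType) (circ : A -> A -> A) (cinv : A -> A).
Hypothesis hB : is_skew_brace circ cinv.

Local Notation lam := (Defs.lam circ).
Local Notation star := (bstar circ).
Local Notation circJ a x := (circ (circ a x) (cinv a)).

Lemma circA x y z : circ x (circ y z) = circ (circ x y) z.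
Proof. by case: hB. Qed.
Lemma circ0x x : circ 0 x = x.
Proof. by case: hB => _ H _ _; case: (H x). Qed.
Lemma circx0 x : circ x 0 = x.
Proof. by case: hB => _ H _ _; case: (H x). Qed.
Lemma circxV x : circ x (cinv x) = 0.
Proof. by case: hB => _ _ H _; case: (H x). Qed.
Lemma circVx x : circ (cinv x) x = 0.
Proof. by case: hB => _ _ H _; case: (H x). Qed.
Lemma circD x y z : circ x (y + z) = circ x y - x + circ x z.
Proof. by case: hB. Qed.

Lemma cinv_uniq a b : circ a b = 0 -> cinv a = b.
Proof. by move=> H; rewrite -[LHS]circx0 -H circA circVx circ0x. Qed.
Lemma cinvK x : cinv (cinv x) = x.
Proof. by apply: cinv_uniq; rewrite circVx. Qed.
Lemma cinvM x y : cinv (circ x y) = circ (cinv y) (cinv x).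
Proof.
by apply: cinv_uniq; rewrite -circA [circ y _]circA circxV circ0x circxV.
Qed.

Lemma circ_lam x y : circ x y = x + lam x y.
Proof. by rewrite /Defs.lam addrA subrr add0r. Qed.
Lemma lamD x y z : lam x (y + z) = lam x y + lam x z.
Proof. by rewrite /Defs.lam circD !addrA. Qed.
Lemma lam0 x : lam x 0 = 0.
Proof. by rewrite /Defs.lam circx0 addNr. Qed.
Lemma lamN x y : lam x (- y) = - lam x y.
Proof. by apply/eqP; rewrite -subr_eq0 opprK -lamD addNr lam0. Qed.
Lemma lamB x y z : lam x (y - z) = lam x y - lam x z.
Proof. by rewrite lamD lamN. Qed.
Lemma lam_circ x y z : lam (circ x y) z = lam x (lam y z).
Proof.
rewrite {1}/Defs.lam -circA [circ y z]circ_lam circD.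
by rewrite [RHS]/Defs.lam !addrA addNr add0r.
Qed.
Lemma lamVK x z : lam (cinv x) (lam x z) = z.
Proof. by rewrite -lam_circ circVx /Defs.lam circ0x oppr0 add0r. Qed.
Lemma cinv_lam x : cinv x = - lam (cinv x) x.
Proof. by rewrite /Defs.lam circVx addr0 opprK. Qed.

Lemma lam_star x y : lam x y = y + star x y.
Proof. by rewrite /bstar addrC addrNK. Qed.
Lemma circ_star x y : circ x y = x + y + star x y.
Proof. by rewrite circ_lam lam_star addrA. Qed.
Lemma starD x y z : star x (y + z) = star x y + star x z.
Proof. by rewrite /bstar lamD opprD addrACA. Qed.
Lemma starN x y : star x (- y) = - star x y.
Proof. by rewrite /bstar lamN [RHS]opprD. Qed.
Lemma starB x y z : star x (y - z) = star x y - star x z.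
Proof. by rewrite starD starN. Qed.

Lemma conj_lam a x : circJ a x = lam a x + lam a (star x (cinv a)).
Proof.
rewrite -circA [circ x _]circ_lam [circ a _]circ_lam lamD (lam_star x) lamD.
by rewrite addrCA (addrA a) -circ_lam circxV add0r.
Qed.

Lemma lam_starJ a x y : lam a (star x y) = star (circJ a x) (lam a y).
Proof. by rewrite /bstar !lam_circ lamVK lamB. Qed.

Lemma circ_commE a y :
  circ_comm circ cinv a y = lam (cinv (circ y a)) (star a y - star y a).
Proof.
rewrite /circ_comm -cinvM [circ (cinv _) (circ a y)]circ_lam {1}cinv_lam.
rewrite addrC -lamB.
congr (lam _ _).
by rewrite !circ_star [y + a]addrC opprD addrACA subrr add0r.
Qed.

Definition add_subgroup (S : A -> Prop) : Prop :=
  S 0 /\ (forall x y, S x -> S y -> S (x - y)).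
Definition cong_mod (S : A -> Prop) (x y : A) : Prop := S (x - y).

Section AddSubgroup.
Variables (S : A -> Prop) (hS : add_subgroup S).

Lemma sg0 : S 0. Proof. by case: hS. Qed.
Lemma sgB x y : S x -> S y -> S (x - y). Proof. by case: hS => _; apply. Qed.
Lemma sgN x : S x -> S (- x).
Proof. by move=> hx; rewrite -sub0r; apply: sgB => //; apply: sg0. Qed.
Lemma sgD x y : S x -> S y -> S (x + y).
Proof. by move=> hx hy; rewrite -[y]opprK; apply: sgB => //; apply: sgN. Qed.

Lemma cong_refl x : cong_mod S x x.
Proof. by rewrite /cong_mod subrr; apply: sg0. Qed.
Lemma cong_sym x y : cong_mod S x y -> cong_mod S y x.
Proof. by rewrite /cong_mod => h; rewrite -opprB; apply: sgN. Qed.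
Lemma cong_trans y x z : cong_mod S x y -> cong_mod S y z -> cong_mod S x z.
Proof. by rewrite /cong_mod => h1 h2; rewrite -(subrKA y); apply: sgD. Qed.
Lemma congD x x' y y' :
  cong_mod S x x' -> cong_mod S y y' -> cong_mod S (x + y) (x' + y').
Proof. by rewrite /cong_mod => h1 h2; rewrite opprD addrACA; apply: sgD. Qed.
Lemma congN x x' : cong_mod S x x' -> cong_mod S (- x) (- x').
Proof. by rewrite /cong_mod => h; rewrite -opprD; apply: sgN. Qed.

Lemma gen_add_min (P : A -> Prop) x :
  (forall z, P z -> S z) -> gen_add P x -> S x.
Proof.
move=> hP; elim=> [z /hP //| |z _|z w _ ih1 _].
- exact: sg0.
- exact: sgN.
- exact: sgD.
Qed.

End AddSubgroup.

Lemma gen_add_subgroup (P : A -> Prop) : add_subgroup (gen_add P).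
Proof. by split=> [|x y hx hy]; [apply: ga_0 | apply/ga_add/ga_opp]. Qed.

Lemma lam_preimage_subgroup S a :
  add_subgroup S -> add_subgroup (fun z => S (lam a z)).
Proof.
move=> hS; split=> [|x y hx hy]; first by rewrite lam0; apply: sg0.
by rewrite lamB; apply: sgB.
Qed.

Lemma star_set_gen X Y x y : X x -> Y y -> star_set circ X Y (star x y).
Proof. by move=> hx hy; apply: ga_in; exists x, y. Qed.

Lemma star_set_min X Y (S : A -> Prop) z : add_subgroup S ->
  (forall x y, X x -> Y y -> S (star x y)) -> star_set circ X Y z -> S z.
Proof.
by move=> hS h; apply: gen_add_min => // w [x [y [hx hy ->]]]; apply: h.
Qed.

Lemma star_set_mono (X X' Y Y' : A -> Prop) z :
  (forall x, X x -> X' x) -> (forall y, Y y -> Y' y) ->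
  star_set circ X Y z -> star_set circ X' Y' z.
Proof.
move=> hX hY; apply: star_set_min; first exact: gen_add_subgroup.
by move=> x y hx hy; apply: star_set_gen; [apply: hX | apply: hY].
Qed.

Definition lam_invariant (S : A -> Prop) : Prop := forall a x, S x -> S (lam a x).

Lemma ideal_of (S : A -> Prop) : add_subgroup S -> lam_invariant S ->
  (forall x y, S x -> S (star x y)) -> is_ideal circ cinv S.
Proof.
move=> hS hL hR; split; first exact: sg0.
split; first by move=> x y; apply: sgB.
split; first exact: hL.
split; first by move=> a x hx; rewrite addrC addKr.
split=> [x y hx hy | a x hx].
  rewrite circ_star; apply: sgD => //; last exact: hR.
  by apply: sgD => //; rewrite cinv_lam; apply: sgN => //; apply: hL.
by rewrite conj_lam; apply: sgD => //; apply: hL => //; apply: hR.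
Qed.

Section Ideal.
Variables (I : A -> Prop) (hI : is_ideal circ cinv I).

Lemma ideal_subgroup : add_subgroup I.
Proof. by case: hI => h0 [hsub _]. Qed.
Lemma ideal_lam : lam_invariant I.
Proof. by case: hI => _ [_ [h _]]. Qed.
Lemma ideal_cinv x : I x -> I (cinv x).
Proof.
case: hI => h0 [_ [_ [_ [h _]]]] hx.
by rewrite -[cinv x]circ0x; apply: h.
Qed.
Lemma ideal_circ x y : I x -> I y -> I (circ x y).
Proof.
case: hI => _ [_ [_ [_ [h _]]]] hx hy.
by rewrite -[y]cinvK; apply: h => //; apply: ideal_cinv.
Qed.

Lemma gen_circ_min (P : A -> Prop) x :
  (forall z, P z -> I z) -> gen_circ circ cinv P x -> I x.
Proof.
move=> hP; elim=> [z /hP //| | z _ | z w _ ih1 _]; last exact: ideal_circ.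
- exact: (sg0 ideal_subgroup).
- exact: ideal_cinv.
Qed.

End Ideal.

(* x + I is central in A/I: modulo I, x star-annihilates and is
   star-annihilated by everything (additive commutators vanish since (A,+)
   is abelian). *)
Lemma center_modI (I : A -> Prop) x : I 0 ->
  (forall y, I (star x y) /\ I (star y x)) -> in_center_mod circ I x.
Proof.
move=> h0 h y; have [h1 h2] := h y; split => //.
by rewrite /addcomm [x + y - x]addrAC subrr add0r subrr.
Qed.

Lemma center_mod_ext (I J : A -> Prop) x : (forall z, I z <-> J z) ->
  in_center_mod circ I x -> in_center_mod circ J x.
Proof. by move=> hE h y; case: (h y) => h1 h2 h3; split; apply/hE. Qed.

Local Notation R := (right_series circ).

Lemma R_subgroup k : add_subgroup (R k).
Proof. by case: k => [|k] //=; apply: gen_add_subgroup. Qed.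

Lemma R_star k x y : R k x -> R k.+1 (star x y).
Proof. by move=> hx; apply: star_set_gen. Qed.

Lemma R_decreasing k x : R k.+1 x -> R k x.
Proof.
by elim: k x => [//|k ih] x /=; apply: star_set_mono => // y; apply: ih.
Qed.

Lemma R_conj_of_lam k :
  lam_invariant (R k) -> forall a x, R k x -> R k (circJ a x).
Proof.
move=> hL a x hx; rewrite conj_lam; apply: sgD; first exact: R_subgroup.
  exact: hL.
by apply: hL; apply: R_decreasing; apply: R_star.
Qed.

Lemma R_lam k : lam_invariant (R k).
Proof.
elim: k => [//|k ih] a x.
apply: (star_set_min (S := fun z => R k.+1 (lam a z))).
  exact/lam_preimage_subgroup/R_subgroup.
move=> u v hu _; rewrite lam_starJ; apply: star_set_gen => //.
exact: R_conj_of_lam.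
Qed.

Lemma R_conj k a x : R k x -> R k (circJ a x).
Proof. exact/R_conj_of_lam/R_lam. Qed.

Lemma R_left_star k a x : R k x -> R k (star a x).
Proof.
by move=> hx; rewrite /bstar; apply: sgB; [exact: R_subgroup | exact: R_lam |].
Qed.

Lemma R_ideal k : is_ideal circ cinv (R k).
Proof.
apply: ideal_of; [exact: R_subgroup | exact: R_lam |].
by move=> x y hx; apply/R_decreasing/R_star.
Qed.

Lemma circ_cong k x y : R k x -> cong_mod (R k.+1) (circ x y) (x + y).
Proof. by move=> hx; rewrite /cong_mod circ_star addrC addKr; apply: R_star. Qed.

Lemma cinv_cong k x : R k x -> cong_mod (R k.+1) (cinv x) (- x).
Proof.
move=> hx; rewrite /cong_mod opprK.
have : circ (cinv x) x = 0 by apply: circVx.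
rewrite circ_star => /eqP; rewrite addr_eq0 => /eqP ->.
apply: sgN; first exact: R_subgroup.
by apply: R_star; apply: ideal_cinv hx; apply: R_ideal.
Qed.

Lemma circJ_cong k a x : R k x -> cong_mod (R k.+1) (circJ a x) (lam a x).
Proof.
by move=> hx; rewrite /cong_mod conj_lam addrC addKr; apply/R_lam/R_star.
Qed.

Definition central_descent (X : A -> Prop) : Prop :=
  exists M (D : nat -> A -> Prop),
  [/\ (forall x, D 0%N x <-> X x), (forall x, D M x <-> x = 0),
      (forall p, (p <= M)%N -> is_ideal circ cinv (D p)),
      (forall p, (p < M)%N -> forall x, D p.+1 x -> D p x) &
      (forall p, (p < M)%N -> forall x, D p x -> in_center_mod circ (D p.+1) x)].

Lemma central_descent_ext X X' :
  (forall x, X x <-> X' x) -> central_descent X -> central_descent X'.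
Proof.
move=> hE [M [D [h0 h1 h2 h3 h4]]]; exists M, D; split => // x.
by rewrite h0 hE.
Qed.

Lemma central_descent_zero X :
  is_ideal circ cinv X -> (forall x, X x <-> x = 0) -> central_descent X.
Proof. by move=> hI hX; exists 0%N, (fun _ => X). Qed.

Lemma central_descent_extend Y X : central_descent Y -> is_ideal circ cinv X ->
  (forall x, Y x -> X x) -> (forall x, X x -> in_center_mod circ Y x) ->
  central_descent X.
Proof.
move=> [M [D [h0 h1 h2 h3 h4]]] hI hYX hC.
exists M.+1, (fun p => if p is p'.+1 then D p' else X); split => //.
- by case=> [|p] //= hp; apply: h2.
- by case=> [|p] //= hp x; [move/h0; apply: hYX | apply: h3].
- case=> [|p] //= hp x; last exact: h4.
  by move/hC; apply: center_mod_ext => z; apply: iff_sym.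
Qed.

Lemma central_descent_series (U : nat -> A -> Prop) N : central_descent (U N) ->
  (forall i, (i < N)%N -> is_ideal circ cinv (U i)) ->
  (forall i, (i < N)%N -> forall x, U i.+1 x -> U i x) ->
  (forall i, (i < N)%N -> forall x, U i x -> in_center_mod circ (U i.+1) x) ->
  central_descent (U 0%N).
Proof.
move=> hN hI hM hC.
suff H j i : (i + j = N)%N -> central_descent (U i) by apply: (H N).
elim: j i => [|j ih] i hij; first by move: hij; rewrite addn0 => ->.
have hi : (i < N)%N by lia.
apply: (central_descent_extend (Y := U i.+1)); first by apply: ih; lia.
- exact: hI.
- exact: hM.
- exact: hC.
Qed.

Lemma centrally_nilpotent_of_descent :
  central_descent (@setA A) -> centrally_nilpotent circ cinv.
Proof.
move=> [M [D [h0 h1 h2 h3 h4]]]; exists M, (fun j => D (M - j)%N); split.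
- by move=> x; rewrite subn0.
- by move=> x; rewrite subnn; apply/h0.
- by move=> j hj; apply: h2; rewrite leq_subr.
- move=> j hj x; have -> : (M - j = (M - j.+1).+1)%N by lia.
  by apply: h3; lia.
- move=> j hj x; have -> : (M - j = (M - j.+1).+1)%N by lia.
  by apply: h4; lia.
Qed.

(* The refined terms
   U_i = A^((k+1)) + (A^((k)) /\ G_i) form a central series of ideals from
   U_0 = A^((k)) to U_N = A^((k+1)). *)
Section Refinement.
Variables (k N : nat) (G : nat -> A -> Prop).

Definition refined (i : nat) (z : A) : Prop :=
  exists v, [/\ R k v, G i v & cong_mod (R k.+1) z v].

Hypothesis G_zero : forall i, G i 0.
Hypothesis G_sub : forall i v1 v2,
  R k v1 -> R k v2 -> G i v1 -> G i v2 -> refined i (v1 - v2).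
Hypothesis G_star : forall i a v, R k v -> G i v -> refined i.+1 (star a v).
Hypothesis G_decreasing : forall i x, G i.+1 x -> G i x.
Hypothesis G_top : forall x, G 0%N x.
Hypothesis G_bottom : forall x, G N x -> x = 0.

Lemma refined_cong i z z' :
  cong_mod (R k.+1) z z' -> refined i z' -> refined i z.
Proof.
move=> hzz' [v [hv hg hz'v]]; exists v; split => //.
by apply: cong_trans hz'v; first exact: R_subgroup.
Qed.

Lemma refined_of_G i v : R k v -> G i v -> refined i v.
Proof.
by move=> hv hg; exists v; split => //; apply: cong_refl; exact: R_subgroup.
Qed.

Lemma refined_of_R1 i z : R k.+1 z -> refined i z.
Proof.
move=> hz; exists 0; split; [exact: (sg0 (R_subgroup k)) | exact: G_zero |].
by rewrite /cong_mod subr0.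
Qed.

Lemma refined_R i z : refined i z -> R k z.
Proof.
move=> [v [hv _ hzv]]; rewrite -(subrK v z).
by apply: sgD => //; [exact: R_subgroup | exact: R_decreasing].
Qed.

Lemma refined_decreasing i z : refined i.+1 z -> refined i z.
Proof.
by move=> [v [hv hg hzv]]; exists v; split => //; apply: G_decreasing.
Qed.

Lemma refined_subgroup i : add_subgroup (refined i).
Proof.
have hR1 := R_subgroup k.+1.
split; first by apply: refined_of_R1; exact: sg0.
move=> z1 z2 [v1 [hv1 hg1 hz1]] [v2 [hv2 hg2 hz2]].
apply: refined_cong (G_sub hv1 hv2 hg1 hg2).
by apply: congD => //; apply: congN.
Qed.

Lemma refined_lam i : lam_invariant (refined i).
Proof.
move=> a z hz; have [v [hv hg hzv]] := hz.
apply: (@refined_cong _ _ (lam a v)).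
  by rewrite /cong_mod -lamB; apply: R_lam.
rewrite lam_star; apply: sgD; first exact: refined_subgroup.
  exact: refined_of_G.
exact/refined_decreasing/G_star.
Qed.

Lemma refined_ideal i : is_ideal circ cinv (refined i).
Proof.
apply: ideal_of; [exact: refined_subgroup | exact: refined_lam |].
by move=> x y /refined_R hx; apply/refined_of_R1/R_star.
Qed.

Lemma refined_center i z : refined i z -> in_center_mod circ (refined i.+1) z.
Proof.
move=> hz; apply: center_modI; first exact: (sg0 (refined_subgroup _)).
move=> y; split; first by apply/refined_of_R1/R_star/(refined_R hz).
have [v [hv hg hzv]] := hz.
apply: (@refined_cong _ _ (star y v)); last exact: G_star.
by rewrite /cong_mod -starB; apply: R_left_star.
Qed.

Lemma central_descent_refine :
  central_descent (R k.+1) -> central_descent (R k).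
Proof.
move=> hdesc.
have h0 : central_descent (refined 0%N).
  apply: (central_descent_series (N := N)).
  - apply: central_descent_ext hdesc => x; split; first exact: refined_of_R1.
    by move=> [v [_ /G_bottom -> hxv]]; rewrite /cong_mod subr0 in hxv.
  - by move=> i _; apply: refined_ideal.
  - by move=> i _; apply: refined_decreasing.
  - by move=> i _; apply: refined_center.
apply: central_descent_ext h0 => x; split; first exact: refined_R.
by move=> hx; apply: refined_of_G.
Qed.

End Refinement.

Lemma central_descent_of_right_series (m : nat) : is_trivial (R m) ->
  (forall k, central_descent (R k.+1) -> central_descent (R k)) ->
  central_descent (@setA A).
Proof.
move=> hm hstep.
suff H j k : (k + j = m)%N -> central_descent (R k) by apply: (H m 0%N).
elim: j k => [|j ih] k hk.
  rewrite addn0 in hk; subst k.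
  apply: central_descent_zero; first exact: R_ideal.
  by move=> x; split=> [/hm // | ->]; apply: sg0; apply: R_subgroup.
by apply: hstep; apply: ih; lia.
Qed.

Local Notation L := (left_series circ).

Lemma L_subgroup i : add_subgroup (L i).
Proof. by case: i => [|i] //=; apply: gen_add_subgroup. Qed.

Lemma L_decreasing i x : L i.+1 x -> L i x.
Proof.
by elim: i x => [//|i ih] x /=; apply: star_set_mono => // y; apply: ih.
Qed.

Lemma left_series_refines nL : is_trivial (L nL) ->
  forall k, central_descent (R k.+1) -> central_descent (R k).
Proof.
move=> hL k; apply: (central_descent_refine (N := nL) (G := L)).
- by move=> i; apply: sg0; apply: L_subgroup.
- move=> i v1 v2 h1 h2 g1 g2.
  apply: refined_of_G; apply: sgB => //.
  - exact: R_subgroup.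
  - exact: L_subgroup.
- move=> i a v h1 h2; apply: refined_of_G; first exact: R_left_star.
  exact: star_set_gen.
- exact: L_decreasing.
- by [].
- exact: hL.
Qed.

(* The lower central series of (A, circ) refines the right series: modulo
   A^((k+1)), on A^((k)) subtraction is circ-division and the star product
   a * v is the group commutator of cinv a and cinv v. *)
Local Notation LC := (lower_central circ cinv).

Lemma LC_zero i : LC i 0.
Proof. by case: i => [|i] //=; apply: gc_1. Qed.
Lemma LC_circ i x y : LC i x -> LC i y -> LC i (circ x y).
Proof. by case: i => [|i] //= hx hy; apply: gc_mul. Qed.
Lemma LC_cinv i x : LC i x -> LC i (cinv x).
Proof. by case: i => [|i] //= hx; apply: gc_inv. Qed.

Lemma gen_circ_mono (P Q : A -> Prop) x : (forall z, P z -> Q z) ->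
  gen_circ circ cinv P x -> gen_circ circ cinv Q x.
Proof.
move=> hPQ; elim=> [z /hPQ|||]; [exact: gc_in | exact: gc_1 | |].
- by move=> z _ ih; apply: gc_inv.
- by move=> z w _ ih1 _ ih2; apply: gc_mul.
Qed.

Lemma LC_decreasing i x : LC i.+1 x -> LC i x.
Proof.
elim: i x => [//|i ih] x /=; apply: gen_circ_mono => z [u [w [h1 h2 ->]]].
by exists u, w; split => //; apply: ih.
Qed.

Lemma sub_cong_circ k x y : R k x -> R k y ->
  cong_mod (R k.+1) (x - y) (circ x (cinv y)).
Proof.
move=> hx hy; have hR1 := R_subgroup k.+1.
apply: (cong_sym hR1); apply: (cong_trans hR1 (circ_cong _ hx)).
by apply: (congD hR1); [exact: cong_refl | exact: cinv_cong].
Qed.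

Lemma star_cong_comm k a v : R k v ->
  cong_mod (R k.+1) (star a v) (circ_comm circ cinv (cinv a) (cinv v)).
Proof.
move=> hv; have hR1 := R_subgroup k.+1.
have -> : circ_comm circ cinv (cinv a) (cinv v) = circ (circJ a v) (cinv v).
  by rewrite /circ_comm !cinvK !circA.
apply: (cong_sym hR1); apply: (cong_trans hR1 (circ_cong _ (R_conj a hv))).
by apply: (congD hR1); [exact: circJ_cong | exact: cinv_cong].
Qed.

Lemma lower_central_refines nC : is_trivial (LC nC) ->
  forall k, central_descent (R k.+1) -> central_descent (R k).
Proof.
move=> hC k; have hRk := R_ideal k.
apply: (central_descent_refine (N := nC) (G := LC)).
- exact: LC_zero.
- move=> i v1 v2 h1 h2 g1 g2; apply: refined_cong (sub_cong_circ h1 h2) _.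
  apply: refined_of_G.
    by apply: (ideal_circ hRk) => //; apply: (ideal_cinv hRk).
  by apply: LC_circ => //; apply: LC_cinv.
- move=> i a v h1 h2; apply: refined_cong (star_cong_comm a h1) _.
  apply: refined_of_G.
    rewrite /circ_comm !cinvK circA.
    exact: (ideal_circ hRk (R_conj a h1) (ideal_cinv hRk h1)).
  by apply: gc_in; exists (cinv a), (cinv v); split => //; apply: LC_cinv.
- exact: LC_decreasing.
- by [].
- exact: hC.
Qed.

(* If a series F moves one step down the I's at each term (F_j <= I_(m+1)
   implies F_(j+1) <= I_m), then F_j <= I_(n-j), hence F_n = 0.  The left,
   right and lower central series all move down since their new generators
   are products with an element that is central modulo the next ideal. *)
Section CentralSeries.
Variables (n : nat) (I : nat -> A -> Prop).
Hypotheses (I_bottom : forall x, I 0%N x <-> x = 0) (I_top : forall x, I n x)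
  (I_ideal : forall j, (j <= n)%N -> is_ideal circ cinv (I j))
  (I_center : forall j, (j < n)%N ->
     forall x, I j.+1 x -> in_center_mod circ (I j) x).

Lemma trivial_below_central_series (F : nat -> A -> Prop) :
  (forall j m, (m < n)%N -> (forall y, F j y -> I m.+1 y) ->
     forall x, F j.+1 x -> I m x) ->
  is_trivial (F n).
Proof.
move=> hstep.
suff H j x : (j <= n)%N -> F j x -> I (n - j)%N x.
  by move=> x /(H n x (leqnn n)); rewrite subnn => /I_bottom.
elim: j x => [|j ih] x hj; first by rewrite subn0.
have hm : (n - j.+1 < n)%N by lia.
apply: hstep => // y /(ih y (ltnW hj)).
by have -> : (n - j = (n - j.+1).+1)%N by lia.
Qed.

Lemma left_series_trivial : is_trivial (L n).
Proof.
apply: trivial_below_central_series => j m hm hF x /=.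
apply: star_set_min; first exact/ideal_subgroup/I_ideal/ltnW.
by move=> a y _ /hF /(I_center hm) /(_ a) [].
Qed.

Lemma right_series_trivial : is_trivial (R n).
Proof.
apply: trivial_below_central_series => j m hm hF x /=.
apply: star_set_min; first exact/ideal_subgroup/I_ideal/ltnW.
by move=> y a /hF /(I_center hm) /(_ a) [].
Qed.

Lemma lower_central_trivial : is_trivial (LC n).
Proof.
apply: trivial_below_central_series => j m hm hF x /=.
have hIm := I_ideal (ltnW hm).
apply: (gen_circ_min hIm) => _ [a [y [_ /hF /(I_center hm) /(_ a) [h1 h2 _] ->]]].
rewrite circ_commE; apply: (ideal_lam hIm).
by apply: sgB => //; apply: ideal_subgroup.
Qed.

End CentralSeries.

Lemma nilpotent_of_centrally_nilpotent : centrally_nilpotent circ cinv ->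
  star_nilpotent circ /\ circ_nilpotent circ cinv.
Proof.
move=> [n [I [h0 hn hid _ hC]]]; split; first split; exists n.
- exact: left_series_trivial h0 hn hid hC.
- exact: right_series_trivial h0 hn hid hC.
- exact: lower_central_trivial h0 hn hid hC.
Qed.

Lemma centrally_nilpotent_of_star_nilpotent :
  star_nilpotent circ -> centrally_nilpotent circ cinv.
Proof.
move=> [[nL hL] [m hm]]; apply: centrally_nilpotent_of_descent.
exact: central_descent_of_right_series hm (left_series_refines hL).
Qed.

Lemma centrally_nilpotent_of_right_circ : right_star_nilpotent circ ->
  circ_nilpotent circ cinv -> centrally_nilpotent circ cinv.
Proof.
move=> [m hm] [nC hC]; apply: centrally_nilpotent_of_descent.
exact: central_descent_of_right_series hm (lower_central_refines hC).
Qed.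

End SkewBrace.

Theorem mainTheorem9 (A : zmodType) (circ : A -> A -> A) (cinv : A -> A)
  (hB : is_skew_brace circ cinv) :
  (star_nilpotent circ <-> right_star_nilpotent circ /\ circ_nilpotent circ cinv) /\
  (right_star_nilpotent circ /\ circ_nilpotent circ cinv <-> centrally_nilpotent circ cinv).
Proof.
have cn_nil := nilpotent_of_centrally_nilpotent hB.
have star_cn := centrally_nilpotent_of_star_nilpotent hB.
have right_circ_cn := centrally_nilpotent_of_right_circ hB.
split; split.
- by move=> /star_cn /cn_nil [[_ hr] hc].
- by move=> [hr hc]; case: (cn_nil (right_circ_cn hr hc)).
- by move=> [hr hc]; apply: right_circ_cn.
- by move=> /cn_nil [[_ hr] hc].
Qed.
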